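(* Let $I\subseteq\mathbb K[x,y,z]$ be a good ideal with $\mu_1=x^{d_1},\mu_2=y^{d_2},\mu_3=z^{d_3}\in G(I)$. (i) If $I=\langle\mu_1,\mu_2,\mu_3\rangle$, then $I^2$ is good and $I^k$ is bad for every integer $k\ge3$. (ii) If $|G(I)|>3$, then $I^k$ is bad for every integer $k\ge2$.
   Context: Let $\mathbb K$ be a field, $R=\mathbb K[x_1,\dots,x_n]$ (here $n=3$), $\mathfrak m=\langle x_1,\dots,x_n\rangle$, $\mathbb N=\{0,1,2,\dots\}$. A monomial $x_1^{\alpha_1}\cdots x_n^{\alpha_n}$ is identified with the point $(\alpha_1,\dots,\alpha_n)\in\mathbb N^n$. For a monomial ideal $I$, $G(I)$ denotes its (unique) minimal monomial generating set. If $I$ is an $\mathfrak m$-primary monomial ideal, then for each $i$ there is a unique $d_i\ge1$ with $x_i^{d_i}\in G(I)$; write $\mu_i=x_i^{d_i}$. For $(a_1,\dots,a_n)\in\mathbb N^n$ the box associated to $I$ is $B_{a_1,\dots,a_n}=([a_1d_1,(a_1+1)d_1]\times\cdots\times[a_nd_n,(a_n+1)d_n])\cap\mathbb N^n$; a monomial belongs to a box if its exponent vector does. An $\mathfrak m$-primary monomial ideal $I$ is called good if for every integer $l\ge1$, every element of $G(I^l)$ belongs to some box $B_{a_1,\dots,a_n}$ with $a_1+\dots+a_n=l-1$; otherwise bad. (Goodness of $I^k$ is defined with respect to its own pure powers $x_i^{kd_i}\in G(I^k)$.) *)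

(* Monomials of K[x,y,z] are identified with exponent
   vectors in N^3 (triples (a,b,c) ~ x^a y^b z^c). A monomial ideal is
   represented by its set of monomials (a predicate on N^3); the field K
   plays no role in the combinatorics of monomial ideals. *)
From mathcomp Require Import all_boot.
Set Implicit Arguments. Unset Strict Implicit. Unset Printing Implicit Defensive.

Definition mono := (nat * nat * nat)%type.

Definition mx (u : mono) := u.1.1.
Definition my (u : mono) := u.1.2.
Definition mz (u : mono) := u.2.

Definition mmul (u v : mono) : mono := (mx u + mx v, my u + my v, mz u + mz v).

Definition mdvd (u v : mono) : bool :=
  [&& mx u <= mx v, my u <= my v & mz u <= mz v].

Definition ideal_of (S : seq mono) : mono -> Prop :=
  fun u => exists2 s, s \in S & mdvd s u.

Fixpoint ipow (J : mono -> Prop) (l : nat) : mono -> Prop :=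
  match l with
  | 0 => fun _ => True
  | l'.+1 => fun u => exists a b, [/\ J a, ipow J l' b & mdvd (mmul a b) u]
  end.

Definition inG (J : mono -> Prop) (u : mono) : Prop :=
  J u /\ (forall v, J v -> mdvd v u -> v = u).

Definition mprimary_with (J : mono -> Prop) (d1 d2 d3 : nat) : Prop :=
  [/\ 0 < d1, 0 < d2 & 0 < d3] /\
  [/\ inG J (d1, 0, 0), inG J (0, d2, 0) & inG J (0, 0, d3)].

Definition mprimary (J : mono -> Prop) : Prop :=
  exists d1 d2 d3, mprimary_with J d1 d2 d3.

Definition in_box (d1 d2 d3 a1 a2 a3 : nat) (u : mono) : bool :=
  [&& a1 * d1 <= mx u <= a1.+1 * d1,
      a2 * d2 <= my u <= a2.+1 * d2 &
      a3 * d3 <= mz u <= a3.+1 * d3].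

Definition good (J : mono -> Prop) : Prop :=
  exists d1 d2 d3, mprimary_with J d1 d2 d3 /\
    forall l, 0 < l -> forall u, inG (ipow J l) u ->
      exists a1 a2 a3, a1 + a2 + a3 = l.-1 /\ in_box d1 d2 d3 a1 a2 a3 u.

Definition bad (J : mono -> Prop) : Prop := mprimary J /\ ~ good J.

From mathcomp Require Import all_boot zify.
From Stdlib Require Import Classical.

Set Implicit Arguments.
Unset Strict Implicit.
Unset Printing Implicit Defensive.

(* Let J be m-primary with pure powers x^d1, y^d2, z^d3 in G(J).
   1. General facts: divisibility is a partial order compatible with
      products, J^m J^n = J^(m+n), (J^m)^l = J^(ml), and every element of a
      monomial ideal is divisible by a minimal generator (well-foundedness).
   2. A minimal generator g all of whose power-divisors are comparable
      with g stays minimal in powers: g^k is in G(J^k).  Hence J^k is again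
      m-primary with pure powers x^(k d1), y^(k d2), z^(k d3), and the box
      exponents in the definition of goodness are forced.
   3. Badness criterion: if J^(2k) contains v strictly below
      (k d1, k d2, k d3) coordinatewise, a minimal generator of (J^k)^2
      dividing v lies in no box B_{a} with a1 + a2 + a3 = 1, so J^k is bad.
   4. For J = <x^d1, y^d2, z^d3>, G(J^n) = {x^(p d1) y^(q d2) z^(r d3) :
      p + q + r = n}; halving (p, q, r) with p + q + r = 2l places these
      in boxes of J^2, so J^2 is good.
   The theorem follows: the criterion is applied to
   g x^((k-1) d1) y^((k-1) d2) z^d3 with g = z^d3 when k >= 3 in (i), and
   with g a non-pure minimal generator (all exponents below d) in (ii). *)

Definition mpow (u : mono) (n : nat) : mono := (n * mx u, n * my u, n * mz u).

Definition pure_mono (d1 d2 d3 p q r : nat) : mono := (p * d1, q * d2, r * d3).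

Definition pure_gens (d1 d2 d3 : nat) : seq mono :=
  [:: (d1, 0, 0); (0, d2, 0); (0, 0, d3)].

Ltac mono_lia :=
  repeat match goal with u : mono |- _ =>
    let a := fresh "a" in let b := fresh "b" in let c := fresh "c" in
    destruct u as [[a b] c] end;
  unfold mdvd, mmul, mpow, pure_mono, mx, my, mz in *; cbn [fst snd] in *; lia.

Lemma mdvd_refl u : mdvd u u.
Proof. mono_lia. Qed.

Lemma mdvd_trans u v w : mdvd u v -> mdvd v w -> mdvd u w.
Proof. mono_lia. Qed.

Lemma mdvd_anti u v : mdvd u v -> mdvd v u -> u = v.
Proof.
case: u => [[a b] c]; case: v => [[a' b'] c'] uv vu.
by have [-> [-> ->]] : a = a' /\ b = b' /\ c = c' by mono_lia.
Qed.

Section IdealPowers.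
Variable J : mono -> Prop.

Lemma ipow_up n b c : ipow J n b -> mdvd b c -> ipow J n c.
Proof.
case: n => [//|n] [a [b' [Ja Jb ab_b]]] bc.
by exists a, b'; split => //; apply: mdvd_trans ab_b bc.
Qed.

Lemma ipow1 u : J u -> ipow J 1 u.
Proof. by move=> Ju; exists u, (0, 0, 0); split => //; mono_lia. Qed.

Lemma ipow_mul m n a b : ipow J m a -> ipow J n b -> ipow J (m + n) (mmul a b).
Proof.
elim: m a => [|m IH] a /= Ja Jb.
  by apply: ipow_up Jb _; mono_lia.
case: Ja => a1 [a2 [Ja1 Ja2 a12_a]].
by exists a1, (mmul a2 b); split; [| apply: IH | mono_lia].
Qed.

Lemma ipow_split m n c : ipow J (m + n) c ->
  exists a b, [/\ ipow J m a, ipow J n b & mdvd (mmul a b) c].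
Proof.
elim: m c => [|m IH] c /=.
  by exists (0, 0, 0), c; split => //; mono_lia.
case=> a1 [b1 [Ja1 Jb1 ab_c]].
have [a2 [b2 [Ja2 Jb2 ab2_b1]]] := IH _ Jb1.
exists (mmul a1 a2), b2; split => //; last by mono_lia.
by exists a1, a2; split => //; apply: mdvd_refl.
Qed.

Lemma ipow_ipow m l u : ipow (ipow J m) l u <-> ipow J (m * l) u.
Proof.
elim: l u => [|l IH] u; first by rewrite muln0.
rewrite mulnS; split.
- case=> a [b [Ja Jb ab_u]].
  by apply: ipow_up ab_u; apply: ipow_mul Ja _; apply/IH.
- case/ipow_split=> a [b [Ja Jb ab_u]].
  by exists a, b; split => //; apply/IH.
Qed.

Lemma ipow_mpow g n : J g -> ipow J n (mpow g n).
Proof.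
move=> Jg; elim: n => [//|n IH].
by exists g, (mpow g n); split => //; mono_lia.
Qed.

End IdealPowers.

Definition mdeg (u : mono) : nat := mx u + my u + mz u.

Lemma mdvd_deg_eq w v : mdvd w v -> mdeg v <= mdeg w -> w = v.
Proof. by move=> wv vw; apply: mdvd_anti (wv) _; move: vw; rewrite /mdeg; mono_lia. Qed.

(* Every element v of a monomial set K is divisible by a minimal generator of
   K: descend along proper divisors, which have strictly smaller degree. *)
Lemma exists_mingen (K : mono -> Prop) v : K v -> exists2 u, inG K u & mdvd u v.
Proof.
suff: forall n v, mdeg v < n -> K v -> exists2 u, inG K u & mdvd u v.
  by apply; apply: ltnSn.
elim=> [//|n IH] {}v v_deg Kv.
have [[w [Kw wv w_ne]] | minimal] :=
  classic (exists w, [/\ K w, mdvd w v & w <> v]).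
- have w_deg : mdeg w < mdeg v.
    by rewrite ltnNge; apply/negP => /(mdvd_deg_eq wv)/w_ne.
  have [|u Gu uw] := IH w _ Kw; first by lia.
  by exists u => //; apply: mdvd_trans uw wv.
- exists v; last exact: mdvd_refl.
  by split => // w Kw wv; apply: NNPP => w_ne; apply: minimal; exists w.
Qed.

Lemma inG_ext (K K' : mono -> Prop) u :
  (forall v, K v <-> K' v) -> inG K u -> inG K' u.
Proof.
move=> KK' [Ku u_min]; split => [|v /KK']; first exact/KK'.
exact: u_min.
Qed.

Lemma mingen_eq (K : mono -> Prop) u v :
  inG K u -> inG K v -> mdvd u v || mdvd v u -> u = v.
Proof.
by move=> [Ku u_min] [Kv v_min] /orP[uv | vu]; [apply: v_min | apply/esym/u_min].
Qed.

(* If every divisor of a power of g is comparable with g (as for a pure power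
   x^d), then a minimal generator g of J gives a minimal generator g^k of J^k:
   each factor from J of an element of J^k dividing g^n is a multiple of g. *)
Lemma mpow_mingen (J : mono -> Prop) g k :
  inG J g -> (forall a n, mdvd a (mpow g n) -> mdvd a g || mdvd g a) ->
  inG (ipow J k) (mpow g k).
Proof.
move=> [Jg g_min] g_chain.
have mpow_dvd : forall k v n, ipow J k v -> mdvd v (mpow g n) -> mdvd (mpow g k) v.
  elim=> [|{}k IH] v n; first by mono_lia.
  case=> a [b [Ja Jb ab_v]] v_gn.
  have a_gn : mdvd a (mpow g n) by apply: mdvd_trans v_gn; mono_lia.
  have g_a : mdvd g a.
    by case/orP: (g_chain a n a_gn) => [/(g_min a Ja) -> | //]; apply: mdvd_refl.
  have b_gn : mdvd b (mpow g n) by apply: mdvd_trans v_gn; mono_lia.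
  by move: (IH b n Jb b_gn); mono_lia.
split; first exact: ipow_mpow.
by move=> v Jv v_gk; apply: mdvd_anti v_gk (mpow_dvd k v k Jv v_gk).
Qed.

(* A monomial supported on at most one variable: its power-divisors all lie
   on the same axis, hence are comparable with it. *)
Definition axial (g : mono) : bool :=
  [|| (my g == 0) && (mz g == 0), (mx g == 0) && (mz g == 0)
    | (mx g == 0) && (my g == 0)].

Lemma axial_chain g a n : axial g -> mdvd a (mpow g n) -> mdvd a g || mdvd g a.
Proof. by rewrite /axial /mpow; mono_lia. Qed.

Lemma pow_mprimary J d1 d2 d3 k : mprimary_with J d1 d2 d3 -> 0 < k ->
  mprimary_with (ipow J k) (k * d1) (k * d2) (k * d3).
Proof.
move=> [[d1_gt0 d2_gt0 d3_gt0] [Gx Gy Gz]] k_gt0.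
split; first by split; rewrite muln_gt0 k_gt0.
have pure_pow g : inG J g -> axial g -> inG (ipow J k) (mpow g k).
  by move=> Gg g_axial; apply: mpow_mingen Gg _ => a n; apply: axial_chain.
split; [move: (pure_pow _ Gx) | move: (pure_pow _ Gy) | move: (pure_pow _ Gz)].
all: rewrite /mpow /mx /my /mz /= !muln0 => Gpow; apply: Gpow.
all: by rewrite /axial /mx /my /mz /= ?eqxx ?andbT ?orbT.
Qed.

Lemma good_with J d1 d2 d3 : good J -> mprimary_with J d1 d2 d3 ->
  forall l, 0 < l -> forall u, inG (ipow J l) u ->
    exists a1 a2 a3, a1 + a2 + a3 = l.-1 /\ in_box d1 d2 d3 a1 a2 a3 u.
Proof.
move=> [e1 [e2 [e3 [[_ [Gx' Gy' Gz']] J_good]]]] [_ [Gx Gy Gz]]; move: J_good.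
have [->] : (e1, 0, 0) = (d1, 0, 0) :> mono by apply: mingen_eq Gx' Gx _; mono_lia.
have [->] : (0, e2, 0) = (0, d2, 0) :> mono by apply: mingen_eq Gy' Gy _; mono_lia.
have [->] : (0, 0, e3) = (0, 0, d3) :> mono by apply: mingen_eq Gz' Gz _; mono_lia.
exact.
Qed.

(* A
   minimal generator of (J^k)^2 dividing v would have to lie in a box
   B_{a1,a2,a3} of J^k with a1 + a2 + a3 = 1, i.e. reach some k d_i. *)
Lemma bad_of_small_square J d1 d2 d3 k v : mprimary_with J d1 d2 d3 -> 0 < k ->
  ipow J (k * 2) v -> mx v < k * d1 -> my v < k * d2 -> mz v < k * d3 ->
  bad (ipow J k).
Proof.
move=> Jprim k_gt0 Jv vx vy vz.
have Jkprim := pow_mprimary Jprim k_gt0.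
split; first by exists (k * d1), (k * d2), (k * d3).
move=> /good_with/(_ Jkprim 2 isT) Jk_good.
have [u Gu uv] := exists_mingen (proj2 (ipow_ipow J k 2 v) Jv).
have [a1 [a2 [a3 [a_sum u_box]]]] := Jk_good u Gu.
have [a_1 | [a_1 | a_1]] : a1 = 1 \/ a2 = 1 \/ a3 = 1 by lia.
all: by move: u_box uv; rewrite /in_box a_1; mono_lia.
Qed.

Lemma sum_between lo1 lo2 lo3 hi1 hi2 hi3 n :
  lo1 <= hi1 -> lo2 <= hi2 -> lo3 <= hi3 -> lo1 + lo2 + lo3 <= n <= hi1 + hi2 + hi3 ->
  exists a1 a2 a3, [/\ a1 + a2 + a3 = n, lo1 <= a1 <= hi1, lo2 <= a2 <= hi2
                     & lo3 <= a3 <= hi3].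
Proof.
move=> *; set a1 := minn hi1 (n - lo2 - lo3); set a2 := minn hi2 (n - a1 - lo3).
by exists a1, a2, (n - a1 - a2); split; lia.
Qed.

Lemma half_split l p q r : 0 < l -> p + q + r = 2 * l ->
  exists a1 a2 a3, a1 + a2 + a3 = l.-1 /\
    [/\ 2 * a1 <= p <= 2 * a1 + 2, 2 * a2 <= q <= 2 * a2 + 2 & 2 * a3 <= r <= 2 * a3 + 2].
Proof.
move=> l_gt0 pqr_2l.
have [||||a1 [a2 [a3 [a_sum a1_b a2_b a3_b]]]] :=
  @sum_between (p.-1 %/ 2) (q.-1 %/ 2) (r.-1 %/ 2) (p %/ 2) (q %/ 2) (r %/ 2) l.-1.
1-4: lia.
by exists a1, a2, a3; split => //; split; lia.
Qed.

Section PureIdeal.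
Variables (J : mono -> Prop) (d1 d2 d3 : nat).
Hypothesis J_pure : forall u, J u <-> ideal_of (pure_gens d1 d2 d3) u.

Lemma pure_ideal_pow l u : ipow J l u <->
  exists p q r, p + q + r = l /\ mdvd (pure_mono d1 d2 d3 p q r) u.
Proof.
elim: l u => [|l IH] u.
  by split => // _; exists 0, 0, 0; split => //; mono_lia.
split.
- case=> a [b [/J_pure [s s_gen s_a] /IH [p [q [r [pqr_l pqr_b]]]] ab_u]].
  move: s_gen; rewrite !inE => /or3P[/eqP s_x | /eqP s_y | /eqP s_z]; subst s.
  + by exists p.+1, q, r; split; [lia | move: s_a pqr_b ab_u; mono_lia].
  + by exists p, q.+1, r; split; [lia | move: s_a pqr_b ab_u; mono_lia].
  + by exists p, q, r.+1; split; [lia | move: s_a pqr_b ab_u; mono_lia].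
- case=> p [q [r [pqr_l pqr_u]]].
  have [s [p' [q' [r' [s_gen pqr'_l s_pqr']]]]] : exists s p' q' r',
      [/\ s \in pure_gens d1 d2 d3, p' + q' + r' = l &
           mdvd (mmul s (pure_mono d1 d2 d3 p' q' r')) (pure_mono d1 d2 d3 p q r)].
    case: p pqr_l {pqr_u} => [|p] pqr_l; last first.
      by exists (d1, 0, 0), p, q, r; rewrite !inE eqxx; split; [| lia | mono_lia].
    case: q pqr_l => [|q] pqr_l; last first.
      by exists (0, d2, 0), 0, q, r; rewrite !inE eqxx orbT; split; [| lia | mono_lia].
    case: r pqr_l => [//|r] pqr_l.
    by exists (0, 0, d3), 0, 0, r; rewrite !inE eqxx !orbT; split; [| lia | mono_lia].
  exists s, (pure_mono d1 d2 d3 p' q' r'); split.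
  + by apply/J_pure; exists s => //; apply: mdvd_refl.
  + by apply/IH; exists p', q', r'; split; last apply: mdvd_refl.
  + exact: mdvd_trans s_pqr' pqr_u.
Qed.

Lemma pure_pow_mingen n u : inG (ipow J n) u ->
  exists p q r, p + q + r = n /\ u = pure_mono d1 d2 d3 p q r.
Proof.
case=> /pure_ideal_pow [p [q [r [pqr_n pqr_u]]]] u_min.
exists p, q, r; split => //; apply/esym/u_min => //.
by apply/pure_ideal_pow; exists p, q, r; split; last apply: mdvd_refl.
Qed.

(* Part (i), goodness: G((J^2)^l) = G(J^(2l)) consists of the monomials
   x^(p d1) y^(q d2) z^(r d3) with p + q + r = 2l, and halving (p, q, r)
   places each of them in a box of J^2 with index sum l - 1. *)
Lemma pure_square_good : mprimary_with J d1 d2 d3 -> good (ipow J 2).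
Proof.
move=> Jprim; exists (2 * d1), (2 * d2), (2 * d3).
split=> [|l l_gt0 u Gu]; first exact: pow_mprimary.
have /pure_pow_mingen [p [q [r [pqr_2l ->]]]] : inG (ipow J (2 * l)) u.
  by apply: inG_ext Gu => v; apply: ipow_ipow.
have [a1 [a2 [a3 [a_sum [a1_b a2_b a3_b]]]]] := half_split l_gt0 pqr_2l.
by exists a1, a2, a3; split => //; rewrite /in_box /pure_mono /mx /my /mz /=; nia.
Qed.

End PureIdeal.

Lemma pure_mono_in_pow J d1 d2 d3 p q r : mprimary_with J d1 d2 d3 ->
  ipow J (p + q + r) (pure_mono d1 d2 d3 p q r).
Proof.
move=> [_ [[Jx _] [Jy _] [Jz _]]]; rewrite -addnA.
apply: ipow_up (ipow_mul (ipow_mpow p Jx) (ipow_mul (ipow_mpow q Jy) (ipow_mpow r Jz))) _.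
mono_lia.
Qed.

(* Instance of the criterion used for both parts of the theorem: for g in J,
   the monomial g x^((k-1) d1) y^((k-1) d2) z^d3 of J^(2k) witnesses badness
   of J^k as soon as it stays below (k d1, k d2, k d3). *)
Lemma bad_pow_of_generator J d1 d2 d3 k g : mprimary_with J d1 d2 d3 -> J g ->
  0 < k -> mx g < d1 -> my g < d2 -> mz g + d3 < k * d3 -> bad (ipow J k).
Proof.
move=> Jprim Jg k_gt0 gx gy gz.
have Jv := ipow_mul (ipow1 Jg) (pure_mono_in_pow k.-1 k.-1 1 Jprim).
have two_k : 1 + (k.-1 + k.-1 + 1) = k * 2 by lia.
rewrite two_k in Jv; apply: bad_of_small_square Jprim k_gt0 Jv _ _ _; mono_lia.
Qed.

(* A minimal generator of J other than x^d1, y^d2, z^d3 has every exponent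
   below the corresponding d_i: otherwise that pure power would divide it. *)
Lemma nonpure_mingen_small J d1 d2 d3 g : mprimary_with J d1 d2 d3 -> inG J g ->
  g \notin pure_gens d1 d2 d3 -> [/\ mx g < d1, my g < d2 & mz g < d3].
Proof.
move=> [_ [[Jx _] [Jy _] [Jz _]]] [_ g_min]; rewrite !inE !negb_or.
case/and3P=> [/eqP gx /eqP gy /eqP gz].
split; rewrite ltnNge; apply/negP => g_ge.
- by apply: gx; apply/esym/g_min => //; mono_lia.
- by apply: gy; apply/esym/g_min => //; mono_lia.
- by apply: gz; apply/esym/g_min => //; mono_lia.
Qed.

Theorem mainTheorem15 (S : seq mono) (d1 d2 d3 : nat) :
  good (ideal_of S) ->
  mprimary_with (ideal_of S) d1 d2 d3 ->
  ((forall u, ideal_of S u <-> ideal_of [:: (d1, 0, 0); (0, d2, 0); (0, 0, d3)] u) ->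
     good (ipow (ideal_of S) 2) /\
     (forall k, 3 <= k -> bad (ipow (ideal_of S) k))) /\
  ((exists gs : seq mono,
      [/\ uniq gs, 3 < size gs & forall g, g \in gs -> inG (ideal_of S) g]) ->
     forall k, 2 <= k -> bad (ipow (ideal_of S) k)).
Proof.
move=> _ Jprim; have [[d1_gt0 d2_gt0 d3_gt0] [_ _ [Jz _]]] := Jprim.
split=> [J_pure | [gs [gs_uniq gs_size gs_gen]] k k_ge2].
  split; first exact: pure_square_good J_pure Jprim.
  move=> k k_ge3; apply: bad_pow_of_generator Jprim Jz _ _ _ _; rewrite /mx /my /mz /=; nia.
have /allPn [g gs_g g_nonpure] : ~~ all (mem (pure_gens d1 d2 d3)) gs.
  apply: contraL gs_size => /allP gs_pure; rewrite -leqNgt.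
  exact: uniq_leq_size gs_uniq gs_pure.
have [gx gy gz] := nonpure_mingen_small Jprim (gs_gen g gs_g) g_nonpure.
apply: bad_pow_of_generator Jprim (gs_gen g gs_g).1 _ gx gy _; nia.
Qed.
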